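(* There exist absolute constants $0<c_1\le c_2$ and $c_3>0$ such that for every integer $N>20$ there is a weight $w\in A_1(\mathbb{R})$ satisfying: (1) $\int_0^1 w(x)\,dx=1$; (2) $c_1N\le [w]_{A_1}\le c_2N$; (3) $|\{x\in(1,\infty): w(x)>x\}|\ge c_3N^2$.
   Context: A weight $w\ge0$ on $\mathbb{R}$ is in $A_1$ if there is $C>0$ with $\frac1{|I|}\int_Iw\le C\operatorname{ess\,inf}_Iw$ for every interval $I$; $[w]_{A_1}$ is the smallest such $C$. $|E|$ is Lebesgue measure. *)

From HB Require Import structures.
From mathcomp Require Import all_boot all_order all_algebra.
From mathcomp Require Import all_classical all_reals all_analysis.
Set Implicit Arguments. Unset Strict Implicit. Unset Printing Implicit Defensive.
Import Order.TTheory GRing.Theory Num.Theory.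
Local Open Scope classical_set_scope.
Local Open Scope ring_scope.

Section A1.
Variable R : realType.
Local Notation mu := (@lebesgue_measure R).

Definition essinf_on (I : set R) (f : R -> \bar R) : \bar R :=
  ereal_sup [set y : \bar R | \forall x \ae mu, I x -> (y <= f x)%E].

Definition avg_on (a b : R) (w : R -> R) : \bar R :=
  ((b - a)^-1)%:E * \int[mu]_(x in `[a, b]) (w x)%:E.

Definition weight (w : R -> R) : Prop :=
  (forall x, 0 <= w x) /\ measurable_fun setT w /\
  (forall a b : R, mu.-integrable `[a, b] (EFin \o w)).

Definition A1_cond (w : R -> R) (C : R) : Prop :=
  forall a b : R, a < b ->
    (avg_on a b w <= C%:E * essinf_on `[a, b] (EFin \o w))%E.

Definition in_A1 (w : R -> R) : Prop := weight w /\ exists C, 0 < C /\ A1_cond w C.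

Definition A1_const (w : R -> R) : \bar R :=
  ereal_inf [set C%:E | C in [set C : R | A1_cond w C]].
End A1.

From HB Require Import structures.
From mathcomp Require Import all_boot all_order all_algebra.
From mathcomp Require Import all_classical all_reals all_analysis.
From mathcomp Require Import ring lra measurable_realfun.
Set Implicit Arguments. Unset Strict Implicit. Unset Printing Implicit Defensive.
Import Order.TTheory GRing.Theory Num.Theory.
Local Open Scope classical_set_scope.
Local Open Scope ring_scope.

(* The weight is [w = 1 + T_1 + ... + T_N], where the tower [T_k] is centred at
   [4 N 2^k] and supported in [[3 N 2^k, 5 N 2^k]]: [1 + T_k] equals [5 N 2^k]
   on the core of radius [N] around the centre and halves each time the
   distance to the centre doubles, down to [2] on the outermost ring.  Thanks to
   this dyadic decay, an interval inside a tower has average at most [O(k + N)]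
   times its infimum, while an interval sticking out of a tower covers a ring
   whose length pays for the mass of the tower it meets; hence
   [[w]_{A_1} <= 1 + 24 N].  Across the edge of the first core, on [[8N, 10N]],
   the average is [5N + 1] and the infimum is [2], so [[w]_{A_1} >= 2N].  The
   [N] cores have length [2N] and lie in [{x > 1 : x < w x}], which therefore
   has measure at least [2 N^2]; on [[0, 1]] the weight is [1]. *)

Section Overlap.
Variable R : realType.
Implicit Types a b lo hi : R.

Definition overlap a b lo hi : R :=
  if Num.max a lo < Num.min b hi then Num.min b hi - Num.max a lo else 0.

Ltac overlap_lra :=
  rewrite /overlap;
  repeat match goal with
  | |- context[Num.max ?x ?y] => case: (leP x y) => ?
  | |- context[Num.min ?x ?y] => case: (leP x y) => ?
  end;
  repeat match goal with
  | |- context[if ?c then _ else _] => case: (boolP c) => ?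
  end;
  intros;
  repeat match goal with
  | H : is_true (~~ (?x <= ?y)) |- _ => rewrite -ltNge in H
  | H : is_true (~~ (?x < ?y)) |- _ => rewrite -leNgt in H
  end; lra.

Lemma overlap_ge0 a b lo hi : 0 <= overlap a b lo hi.
Proof. overlap_lra. Qed.

Lemma overlap_le_len a b lo hi : a <= b -> overlap a b lo hi <= b - a.
Proof. move=> ?; overlap_lra. Qed.

Lemma overlap_le_width a b lo hi : lo <= hi -> overlap a b lo hi <= hi - lo.
Proof. move=> ?; overlap_lra. Qed.

Lemma overlap_id a b lo hi : lo <= a -> b <= hi -> a <= b -> overlap a b lo hi = b - a.
Proof. move=> ???; overlap_lra. Qed.

Lemma overlap_right a b lo hi : lo <= a -> a <= hi -> hi <= b -> overlap a b lo hi = hi - a.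
Proof. move=> ???; overlap_lra. Qed.

Lemma overlap_monotone a b lo hi lo' hi' : lo' <= lo -> hi <= hi' ->
  overlap a b lo hi <= overlap a b lo' hi'.
Proof. move=> ??; overlap_lra. Qed.

Lemma overlap_split a b lo mid hi : a <= b -> lo <= mid <= hi ->
  overlap a b lo mid + overlap a b mid hi <= overlap a b lo hi.
Proof. by move=> ? /andP[? ?]; overlap_lra. Qed.

(* If [a, b] meets [lo', hi'] but sticks out of the larger [lo, hi], it
   crosses one of the two margins of [lo, hi] around [lo', hi']. *)
Lemma overlap_ge_margin a b lo hi lo' hi' d :
  a < lo \/ hi < b -> lo <= lo' <= hi' -> hi' <= hi ->
  d <= lo' - lo -> d <= hi - hi' -> 0 < overlap a b lo' hi' -> d <= overlap a b lo hi.
Proof. by case=> ? /andP[? ?]; overlap_lra. Qed.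

Local Notation mu := (@lebesgue_measure R).

Lemma integral_indic_itv a b lo hi :
  (\int[mu]_(x in `[a, b]) (\1_`[lo, hi] x)%:E = (overlap a b lo hi)%:E)%E.
Proof.
have itvI : `[lo, hi] `&` `[a, b] = [set` `[Num.max a lo, Num.min b hi]] :> set R.
  apply/seteqP; split=> x /=; rewrite !in_itv /= ?ge_max ?le_min.
  - by case=> /andP[-> ->] /andP[-> ->].
  - by case/andP=> /andP[-> ->] /andP[-> ->].
rewrite integral_indic//= itvI lebesgue_measure_itv /= /overlap lte_fin.
by case: ifP => // _; rewrite EFinB.
Qed.

End Overlap.

Section Tower.
Variable R : realType.
Local Notation mu := (@lebesgue_measure R).

Lemma indic_itv_in (lo hi x : R) : lo <= x -> x <= hi -> \1_`[lo, hi] x = 1 :> R.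
Proof. by move=> h1 h2; rewrite indicE mem_set //= in_itv /= h1 h2. Qed.

Lemma indic_itv_out (lo hi x : R) : x < lo \/ hi < x -> \1_`[lo, hi] x = 0 :> R.
Proof.
move=> h; rewrite indicE memNset //= in_itv /= => /andP[h1 h2].
by case: h => h; lra.
Qed.

Lemma indic_itv_ge0 (lo hi x : R) : 0 <= \1_`[lo, hi] x :> R.
Proof. by rewrite indicE. Qed.

Definition radius (m : R) (k : nat) : R := m * 2 ^+ k.

Section Radius.
Variable m : R.
Hypothesis m_gt0 : 0 < m.

Lemma radius0 : radius m 0%N = m.
Proof. by rewrite /radius expr0 mulr1. Qed.

Lemma radiusS k : radius m k.+1 = 2 * radius m k.
Proof. by rewrite /radius exprS mulrCA. Qed.

Lemma radius_gt0 k : 0 < radius m k.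
Proof. by rewrite /radius mulr_gt0 // exprn_gt0. Qed.

Lemma radius_le k n : (k <= n)%N -> radius m k <= radius m n.
Proof.
elim: n => [|n IH]; first by rewrite leqn0 => /eqP ->.
rewrite leq_eqVlt => /orP[/eqP -> //|]; rewrite ltnS => /IH.
by rewrite radiusS; have := radius_gt0 n; lra.
Qed.

Lemma radius_ge k : m <= radius m k.
Proof. by rewrite -[X in X <= _]radius0; exact: radius_le. Qed.

End Radius.

Section OneTower.
Variables (p m D : R).
(* [lra] ignores section hypotheses: proofs below feed them to it with [have]. *)
Hypotheses (m_gt0 : 0 < m) (D_ge1 : 1 <= D).

(* [1 + tower L] is [2 ^+ L * D] on [p - m, p + m], is [2 ^+ (L - j + 1)] on
   the ring between radii [radius m j.-1] and [radius m j], and is [1] outside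
   [p - radius m L, p + radius m L]: the weight doubles each time the distance
   to [p] halves. *)
Fixpoint tower (L : nat) (x : R) : R :=
  match L with
  | 0 => (D - 1) * \1_`[p - radius m 0%N, p + radius m 0%N] x
  | L'.+1 => \1_`[p - radius m L, p + radius m L] x + 2 * tower L' x
  end.

Fixpoint tower_int (a b : R) (L : nat) : R :=
  match L with
  | 0 => (D - 1) * overlap a b (p - radius m 0%N) (p + radius m 0%N)
  | L'.+1 => overlap a b (p - radius m L) (p + radius m L) + 2 * tower_int a b L'
  end.

Lemma tower_ge0 L x : 0 <= tower L x.
Proof.
elim: L => [|L IH] /=; first by apply: mulr_ge0; [have := D_ge1; lra | exact: indic_itv_ge0].
by apply: addr_ge0 (indic_itv_ge0 _ _ _) _; rewrite mulr_ge0.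
Qed.

Lemma measurable_tower L : measurable_fun setT (tower L).
Proof.
elim: L => [|L IH] /=; first exact: measurable_funM.
by apply: measurable_funD => //; exact: measurable_funM.
Qed.

Lemma integral_tower a b L :
  (\int[mu]_(x in `[a, b]) (tower L x)%:E = (tower_int a b L)%:E)%E.
Proof.
have indic_ge0 lo hi x : (0 <= (\1_`[lo, hi] x)%:E :> \bar R)%E.
  by rewrite lee_fin indicE.
elim: L => [|L IH] /=.
  under eq_integral do rewrite EFinM.
  rewrite ge0_integralZl_EFin ?integral_indic_itv //; last by have := D_ge1; lra.
  by apply/measurable_EFinP; exact: measurable_funTS.
under eq_integral do rewrite EFinD EFinM.
rewrite ge0_integralD //.
- rewrite ge0_integralZl_EFin ?integral_indic_itv ?IH -?EFinM -?EFinD //.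
  + by move=> x _; rewrite lee_fin tower_ge0.
  + by apply/measurable_EFinP; apply: measurable_funTS; exact: measurable_tower.
- by apply/measurable_EFinP; exact: measurable_funTS.
- by move=> x _; rewrite -EFinM lee_fin mulr_ge0 // tower_ge0.
- apply/measurable_EFinP; apply: measurable_funTS.
  by apply: measurable_funM => //; exact: measurable_tower.
Qed.

Lemma tower_eq0 L x : x < p - radius m L \/ p + radius m L < x -> tower L x = 0.
Proof.
elim: L => [|L IH] /= h; first by rewrite indic_itv_out ?mulr0.
have := radius_gt0 m_gt0 L; rewrite radiusS in h * => r_gt0.
rewrite indic_itv_out; last by case: h => ?; lra.
by rewrite IH ?mulr0 ?addr0 //; case: h => ?; lra.
Qed.

Lemma tower_core L x : p - m <= x -> x <= p + m -> tower L x = 2 ^+ L * D - 1.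
Proof.
move=> h1 h2; elim: L => [|L IH] /=.
  by rewrite radius0 indic_itv_in // expr0 mul1r mulr1.
have := radius_ge m_gt0 L.+1 => r.
by rewrite indic_itv_in ?IH ?exprS; [ring | lra | lra].
Qed.

Lemma tower_int_eq0 a b L :
  overlap a b (p - radius m L) (p + radius m L) = 0 -> tower_int a b L = 0.
Proof.
elim: L => [|L IH] /= ov0; first by rewrite ov0 mulr0.
rewrite ov0 IH ?mulr0 ?addr0 //; apply/eqP; rewrite eq_le overlap_ge0 andbT -ov0.
by apply: overlap_monotone; rewrite radiusS; have := radius_gt0 m_gt0 L; lra.
Qed.

Lemma tower_int_le a b L : tower_int a b L <= 2 * radius m L * (L%:R + D).
Proof.
elim: L => [|L IH] /=.
  rewrite radius0 add0r.
  have ov_le : overlap a b (p - m) (p + m) <= 2 * m.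
    by apply: le_trans (overlap_le_width a b _) _; have := m_gt0; lra.
  have : (D - 1) * overlap a b (p - m) (p + m) <= D * (2 * m).
    by apply: ler_pM; rewrite ?overlap_ge0 //; have := D_ge1; lra.
  lra.
have r_gt0 := radius_gt0 m_gt0 L.+1.
have : overlap a b (p - radius m L.+1) (p + radius m L.+1) <= 2 * radius m L.+1.
  by apply: le_trans (overlap_le_width a b _) _; lra.
rewrite radiusS in IH * => ov_le.
rewrite -[L.+1]addn1 natrD.
have -> : 2 * (2 * radius m L) * (L%:R + 1 + D) =
  2 * (2 * radius m L * (L%:R + D)) + 4 * radius m L by ring.
have := radius_gt0 m_gt0 L; lra.
Qed.

(* An interval sticking out of the support of the tower covers at least the
   outermost ring of every level it meets, which pays for that level. *)
Lemma tower_int_le_outside a b L : a < p - radius m L \/ p + radius m L < b ->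
  tower_int a b L <= 4 * (L%:R + D) * overlap a b (p - radius m L) (p + radius m L).
Proof.
case: L => [|L] out /=.
  rewrite add0r; apply: ler_wpM2r; rewrite ?overlap_ge0 //; have := D_ge1; lra.
set o := overlap a b (p - radius m L.+1) _.
have o_ge0 : 0 <= o := overlap_ge0 _ _ _ _.
have LD_ge0 : 0 <= L%:R + D by have := ler0n R L; have := D_ge1; lra.
have -> : 4 * (L.+1%:R + D) * o = o + 2 * (2 * o * (L%:R + D)) + 3 * o.
  by rewrite -[L.+1]addn1 natrD; ring.
suff : tower_int a b L <= 2 * o * (L%:R + D) by lra.
have [ov0|ov_gt0] := eqVneq (overlap a b (p - radius m L) (p + radius m L)) 0.
  by rewrite tower_int_eq0 // !mulr_ge0.
have r_le_o : radius m L <= o.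
  have rS := radiusS m L; have r_gt0 := radius_gt0 m_gt0 L.
  apply: (overlap_ge_margin (lo' := p - radius m L) (hi' := p + radius m L) out).
  - by apply/andP; split; lra.
  - lra.
  - lra.
  - lra.
  - by rewrite lt_neqAle eq_sym ov_gt0 overlap_ge0.
apply: le_trans (tower_int_le a b L) _.
by apply: ler_wpM2r; lra.
Qed.

Lemma tower_A1_inside K a b L : 4 * (L%:R + D) <= K -> a <= b ->
  p - radius m L <= a -> b <= p + radius m L ->
  exists v, [/\ 1 <= v, (forall x, a <= x -> x <= b -> v <= 1 + tower L x) &
    (b - a) + tower_int a b L <= (1 + K) * v * (b - a)].
Proof.
move=> + ab; have ba_ge0 : 0 <= b - a by lra.
have D_ge0 : 0 <= D by have := D_ge1; lra.
elim: L => [|L IH] K_ge pa bp /=.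
  have K_ge0 : 0 <= K by have := ler0n R 0%N; lra.
  exists D; split => [|x xa xb|]; [exact: D_ge1 | by rewrite indic_itv_in; lra |].
  rewrite overlap_id //.
  have : 0 <= K * D * (b - a) by rewrite !mulr_ge0.
  lra.
have K_ge' : 4 * (L%:R + D) <= K by move: K_ge; rewrite -[L.+1]addn1 natrD; lra.
rewrite overlap_id //.
have ring1 x : a <= x -> x <= b -> \1_`[p - radius m L.+1, p + radius m L.+1] x = 1 :> R.
  by move=> xa xb; apply: indic_itv_in; lra.
have [[pa' bp']|out] : (p - radius m L <= a /\ b <= p + radius m L) \/
    (a < p - radius m L \/ p + radius m L < b).
  rewrite !ltNge; case: (p - radius m L <= a); case: (b <= p + radius m L);
  by [left | right; left | right; right].
- have [v [v_ge1 v_le int_le]] := IH K_ge' pa' bp'.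
  exists (2 * v); split => [|x xa xb|]; first lra.
    by rewrite ring1 //; have := v_le x xa xb; lra.
  lra.
- exists 2; split => [|x xa xb|]; first lra.
    by rewrite ring1 //; have := tower_ge0 L x; lra.
  have := tower_int_le_outside out.
  have := overlap_le_len (p - radius m L) (p + radius m L) ab.
  have := overlap_ge0 a b (p - radius m L) (p + radius m L).
  set o := overlap _ _ _ _ => o_ge0 o_le int_le.
  have : 4 * (L%:R + D) * o <= K * (b - a) by apply: ler_pM => //; have := ler0n R L; lra.
  lra.
Qed.

End OneTower.
End Tower.

Section A1Facts.
Variable R : realType.
Local Notation mu := (@lebesgue_measure R).

Lemma essinf_on_ge (I : set R) (f : R -> R) v : (forall x, I x -> v <= f x) ->
  (v%:E <= essinf_on I (EFin \o f))%E.
Proof.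
by move=> h; apply: ereal_sup_ubound; apply: aeW => x Ix; rewrite lee_fin h.
Qed.

Lemma essinf_on_le (I : set R) (f : R -> R) lo hi c : lo < hi -> `]lo, hi[ `<=` I ->
  (forall x, lo < x -> x < hi -> f x = c) -> (essinf_on I (EFin \o f) <= c%:E)%E.
Proof.
move=> lohi sub fc; apply: ge_ereal_sup => y /= [A [mA A0 sA]].
rewrite leNgt; apply/negP => cy.
have itv_sub : `]lo, hi[ `<=` A.
  move=> x xi; apply: sA => /= h.
  have := h (sub _ xi); move: xi; rewrite /= in_itv /= => /andP[x1 x2].
  by rewrite fc // leNgt cy.
have le_A := le_measure mu (mem_set (measurable_itv `]lo, hi[)) (mem_set mA) itv_sub.
have A_le0 : (mu A <= 0)%E by rewrite A0.
have itv_ge : ((hi - lo)%:E <= mu `]lo, hi[)%E.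
  by rewrite lebesgue_measure_itv /= lte_fin lohi -EFinD.
by have := le_trans itv_ge (le_trans le_A A_le0); rewrite lee_fin; lra.
Qed.

Lemma A1_const_le (w : R -> R) C : A1_cond w C -> (A1_const w <= C%:E)%E.
Proof. by move=> wC; apply: ereal_inf_lbound; exists C. Qed.

Lemma A1_const_ge (w : R -> R) c : (forall C, A1_cond w C -> c <= C) ->
  (c%:E <= A1_const w)%E.
Proof. by move=> h; apply: le_ereal_inf_tmp => _ [C wC <-]; rewrite lee_fin h. Qed.

Lemma A1_cond_ge (w : R -> R) C a b alpha beta : a < b -> A1_cond w C -> 0 < alpha ->
  (alpha%:E <= avg_on a b w)%E -> (0 <= essinf_on `[a, b] (EFin \o w))%E ->
  (essinf_on `[a, b] (EFin \o w) <= beta%:E)%E -> alpha <= C * beta.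
Proof.
move=> ab wC alpha_gt0 avg_ge e_ge0 e_le.
have {avg_ge} := le_trans avg_ge (wC a b ab).
have [C_ge0 h|C_lt0 h] := leP 0 C.
  rewrite -lee_fin EFinM; apply: le_trans h _.
  by apply: lee_wpmul2l; rewrite ?lee_fin.
have : (alpha%:E <= 0)%E.
  by apply: le_trans h _; apply: mule_le0_ge0 => //; rewrite lee_fin ltW.
by rewrite lee_fin; lra.
Qed.

Lemma weightP (w : R -> R) : (forall x, 0 <= w x) -> measurable_fun setT w ->
  (forall a b, a <= b -> exists I : R, (\int[mu]_(x in `[a, b]) (w x)%:E = I%:E)%E) ->
  weight w.
Proof.
move=> w_ge0 mw int_fin; split=> //; split=> // a b.
apply/integrableP; split; first by apply/measurable_EFinP; exact: measurable_funTS.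
under eq_integral do rewrite /= ger0_norm //.
have [ab|ba] := leP a b; first by have [I ->] := int_fin a b ab; rewrite ltry.
by rewrite set_itv_ge ?integral_set0 // bnd_simp -ltNge.
Qed.

End A1Facts.

Section Weight.
Variable R : realType.
Local Notation mu := (@lebesgue_measure R).
Variables (M D : R).
Hypotheses (M_gt0 : 0 < M) (D_ge1 : 1 <= D).

Definition center (k : nat) : R := 4 * radius M k.

Fixpoint spikes (n : nat) (x : R) : R :=
  match n with 0 => 0 | n'.+1 => spikes n' x + tower (center n) M D n x end.

Fixpoint spikes_int (a b : R) (n : nat) : R :=
  match n with 0 => 0 | n'.+1 => spikes_int a b n' + tower_int (center n) M D a b n end.

Definition spiky (n : nat) (x : R) : R := 1 + spikes n x.

Lemma spikesS n x : spikes n.+1 x = spikes n x + tower (center n.+1) M D n.+1 x.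
Proof. by []. Qed.

Lemma spikes_intS a b n :
  spikes_int a b n.+1 = spikes_int a b n + tower_int (center n.+1) M D a b n.+1.
Proof. by []. Qed.

Lemma spikes_ge0 n x : 0 <= spikes n x.
Proof. by elim: n => [|n IH] //; rewrite spikesS addr_ge0 //; apply: tower_ge0. Qed.

Lemma measurable_spikes n : measurable_fun setT (spikes n).
Proof.
elim: n => [|n IH]; first exact: measurable_cst.
by apply: measurable_funD => //; exact: measurable_tower.
Qed.

Lemma integral_spikes a b n :
  (\int[mu]_(x in `[a, b]) (spikes n x)%:E = (spikes_int a b n)%:E)%E.
Proof.
elim: n => [|n IH]; first exact: integral0_eq.
under eq_integral do rewrite spikesS EFinD.
rewrite ge0_integralD //.
- by rewrite IH integral_tower // spikes_intS EFinD.
- by move=> x _; rewrite lee_fin spikes_ge0.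
- by apply/measurable_EFinP; apply: measurable_funTS; exact: measurable_spikes.
- by move=> x _; rewrite lee_fin; apply: tower_ge0.
- by apply/measurable_EFinP; apply: measurable_funTS; exact: measurable_tower.
Qed.

Lemma spikes_int_eq0 a b n : (forall x, a <= x -> x <= b -> spikes n x = 0) ->
  spikes_int a b n = 0.
Proof.
move=> S0; apply/eqP; rewrite -(@eqe R) -integral_spikes integral0_eq //= => x.
by rewrite in_itv /= => /andP[xa xb]; rewrite S0.
Qed.

Lemma spikes_eq0_above n x : 5 * radius M n < x -> spikes n x = 0.
Proof.
elim: n => [//|n IH] x_gt; rewrite spikesS.
have r_gt0 := radius_gt0 M_gt0 n; have rS := radiusS M n.
rewrite IH ?add0r; last lra.
by apply: tower_eq0 => //; rewrite /center; right; lra.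
Qed.

Lemma spikes_eq0_below n x : x < 6 * M -> spikes n x = 0.
Proof.
elim: n => [//|n IH] x_lt; rewrite spikesS IH // add0r.
have := radius_le M_gt0 (ltn0Sn n); rewrite radiusS radius0 => r_ge.
by apply: tower_eq0 => //; rewrite /center; left; lra.
Qed.

Lemma spikes_first n x : (1 <= n)%N -> x < 12 * M ->
  spikes n x = tower (center 1%N) M D 1%N x.
Proof.
elim: n => [//|n IH] + x_lt; rewrite spikesS leq_eqVlt => /orP[/eqP [<-]|].
  by rewrite [spikes 0%N x]/= add0r.
rewrite ltnS => /[dup] n_gt0 /IH -> //.
rewrite (tower_eq0 (p := center n.+1) D M_gt0) ?addr0 //; left; rewrite /center.
have : radius M 2%N <= radius M n.+1 by exact: radius_le.
by rewrite !radiusS radius0; lra.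
Qed.

Lemma tower_le_spikes n k x : (1 <= k <= n)%N -> tower (center k) M D k x <= spikes n x.
Proof.
elim: n => [|n IH]; first by case/andP=> k_ge1 /(leq_trans k_ge1).
case/andP => k_ge1; rewrite spikesS leq_eqVlt => /orP[/eqP ->|].
  by rewrite lerDr spikes_ge0.
rewrite ltnS => kn; apply: le_trans (IH _) _; first by rewrite k_ge1.
by rewrite lerDl; apply: tower_ge0.
Qed.

Lemma spiky_ge1 n x : 1 <= spiky n x.
Proof. by rewrite /spiky lerDl spikes_ge0. Qed.

Lemma integral_spiky a b n : a <= b ->
  (\int[mu]_(x in `[a, b]) (spiky n x)%:E = (b - a + spikes_int a b n)%:E)%E.
Proof.
move=> ab; rewrite /spiky; under eq_integral do rewrite EFinD.
rewrite ge0_integralD //.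
- rewrite integral_spikes integral_cst //= mul1e lebesgue_measure_itv /= lte_fin.
  case: ltP => [_|ba]; first by rewrite -!EFinD.
  have -> : b = a by apply/eqP; rewrite eq_le ab ba.
  by rewrite subrr add0e add0r.
- by move=> x _; rewrite lee_fin spikes_ge0.
- by apply/measurable_EFinP; apply: measurable_funTS; exact: measurable_spikes.
Qed.

Lemma weight_spiky n : weight (spiky n).
Proof.
apply: weightP => [x | | a b ab]; first by have := spiky_ge1 n x; lra.
  by apply: measurable_funD => //; exact: measurable_spikes.
by exists (b - a + spikes_int a b n); exact: integral_spiky.
Qed.

Lemma spiky_int01 n : 1 < 6 * M ->
  (\int[mu]_(x in `[0%R, 1%R]) (spiky n x)%:E = 1)%E.
Proof.
move=> M_gt; rewrite integral_spiky ?ler01 // spikes_int_eq0 ?subr0 ?addr0 // => x _ x1.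
by apply: spikes_eq0_below; lra.
Qed.

(* The supports of the towers lie in the disjoint intervals
   [3 * radius M k, 5 * radius M k]. *)
Lemma overlap_towers a b n : a <= b ->
  overlap a b 0 (5 * radius M n) +
    overlap a b (center n.+1 - radius M n.+1) (center n.+1 + radius M n.+1)
  <= overlap a b 0 (5 * radius M n.+1).
Proof.
move=> ab; have r_gt0 := radius_gt0 M_gt0 n; have rS := radiusS M n.
apply: le_trans (overlap_split (mid := 5 * radius M n) ab _); last by apply/andP; split; lra.
by rewrite lerD2l; apply: overlap_monotone; rewrite /center; lra.
Qed.

Lemma spikes_A1 K a b n : 4 * (n%:R + D) <= K -> a <= b ->
  exists v, [/\ 1 <= v, (forall x, a <= x -> x <= b -> v <= spiky n x) &
    (b - a) + spikes_int a b n <= v * (b - a) + K * v * overlap a b 0 (5 * radius M n)].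
Proof.
move=> + ab; elim: n => [|n IH] K_ge.
  exists 1; split => // [x _ _|]; first exact: spiky_ge1.
  have : 0 <= K * 1 * overlap a b 0 (5 * radius M 0%N).
    by rewrite mulr1 mulr_ge0 ?overlap_ge0 //; have := ler0n R 0%N; have := D_ge1; lra.
  by rewrite /= mul1r; lra.
have K_ge' : 4 * (n%:R + D) <= K by move: K_ge; rewrite -[n.+1]addn1 natrD; lra.
have K_ge0 : 0 <= K by have := ler0n R n; have := D_ge1; lra.
have r_gt0 := radius_gt0 M_gt0 n; have rS := radiusS M n.
have cS : center n.+1 = 8 * radius M n by rewrite /center rS; ring.
have [[ca bc]|out] : (center n.+1 - radius M n.+1 <= a /\ b <= center n.+1 + radius M n.+1)
    \/ (a < center n.+1 - radius M n.+1 \/ center n.+1 + radius M n.+1 < b).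
  rewrite !ltNge; case: (_ <= a); case: (b <= _);
  by [left | right; left | right; right].
- have [v [v_ge1 v_le int_le]] := tower_A1_inside M_gt0 D_ge1 K_ge ab ca bc.
  have S0 x : a <= x -> spikes n x = 0 by move=> xa; apply: spikes_eq0_above; lra.
  exists v; split => [//|x xa xb|].
    by rewrite /spiky spikesS S0 // add0r; exact: v_le.
  rewrite spikes_intS spikes_int_eq0 ?add0r => [|x xa _]; last exact: S0.
  by rewrite overlap_id //; lra.
- have [v [v_ge1 v_le int_le]] := IH K_ge'.
  exists v; split => // [x xa xb|].
    by apply: le_trans (v_le x xa xb) _; rewrite lerD2l spikesS lerDl; apply: tower_ge0.
  have := tower_int_le_outside M_gt0 D_ge1 out.
  have := overlap_towers n ab.
  have := overlap_ge0 a b (center n.+1 - radius M n.+1) (center n.+1 + radius M n.+1).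
  set o := overlap a b (center n.+1 - _) _ => o_ge0 ov_le T_le; rewrite spikes_intS.
  have : 4 * (n.+1%:R + D) * o <= K * v * o.
    apply: ler_wpM2r => //; rewrite -[X in X <= _]mulr1; apply: ler_pM => //.
    by have := ler0n R n.+1; have := D_ge1; lra.
  have : K * v * (overlap a b 0 (5 * radius M n) + o) <=
    K * v * overlap a b 0 (5 * radius M n.+1).
    by apply: ler_wpM2l => //; rewrite mulr_ge0 //; lra.
  lra.
Qed.

Lemma spiky_A1_cond n : A1_cond (spiky n) (1 + 4 * (n%:R + D)).
Proof.
move=> a b ab; rewrite /avg_on integral_spiky ?(ltW ab) //.
set K := 4 * (n%:R + D).
have K_ge0 : 0 <= K by rewrite /K; have := ler0n R n; have := D_ge1; lra.
have [v [v_ge1 v_le int_le]] := spikes_A1 (lexx K) (ltW ab).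
have v_essinf : (v%:E <= essinf_on `[a, b] (EFin \o spiky n))%E.
  by apply: essinf_on_ge => x; rewrite /= in_itv /= => /andP[? ?]; exact: v_le.
apply: le_trans (lee_wpmul2l _ v_essinf); last by rewrite lee_fin; lra.
rewrite -!EFinM lee_fin ler_pdivrMl ?subr_gt0 //.
have : K * v * overlap a b 0 (5 * radius M n) <= K * v * (b - a).
  by apply: ler_wpM2l; [rewrite mulr_ge0 //; lra | exact/overlap_le_len/ltW].
lra.
Qed.

Lemma in_A1_spiky n : in_A1 (spiky n).
Proof.
split; first exact: weight_spiky.
by exists (1 + 4 * (n%:R + D)); split; [have := ler0n R n; have := D_ge1; lra | exact: spiky_A1_cond].
Qed.

(* On [8M, 10M] the first tower is [2D - 1] on the core [7M, 9M] and [1] on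
   [9M, 10M]: the average is [D + 1] while the essential infimum is [2]. *)
Lemma spiky_A1_cond_ge n C : (1 <= n)%N -> A1_cond (spiky n) C -> D + 1 <= 2 * C.
Proof.
move=> n_ge1 wC; have M_gt0' := M_gt0; have D_ge1' := D_ge1.
have r1 : radius M 1%N = 2 * M by rewrite radiusS radius0.
have first_tower : spikes_int (8 * M) (10 * M) n = 2 * D * M.
  apply: EFin_inj; rewrite -integral_spikes.
  under eq_integral => x.
    by rewrite inE /= in_itv /= => /andP[_ x_le]; rewrite spikes_first //; [over | lra].
  rewrite integral_tower //= /center r1 radius0; congr (_%:E).
  rewrite overlap_id; [|lra|lra|lra]; rewrite overlap_right; [|lra|lra|lra].
  ring.
have avg_eq : ((D + 1)%:E <= avg_on (8 * M) (10 * M) (spiky n))%E.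
  rewrite /avg_on integral_spiky ?first_tower -?EFinM ?lee_fin; last lra.
  rewrite ler_pdivlMl; last lra.
  lra.
have essinf_ge0 : (0 <= essinf_on `[(8 * M)%R, (10 * M)%R] (EFin \o spiky n))%E.
  by apply: essinf_on_ge => x _; have := spiky_ge1 n x; lra.
have essinf_le2 : (essinf_on `[(8 * M)%R, (10 * M)%R] (EFin \o spiky n) <= 2%:E)%E.
  apply: (@essinf_on_le _ _ _ (9 * M) (10 * M)); first lra.
    by move=> x; rewrite /= !in_itv /= => /andP[? ?]; apply/andP; split; lra.
  move=> x x_gt x_lt; rewrite /spiky spikes_first //; last lra.
  rewrite /= /center r1 radius0 indic_itv_in; [|lra|lra].
  by rewrite indic_itv_out ?mulr0 ?addr0; [ring | right; lra].
rewrite mulrC; apply: (A1_cond_ge _ wC _ avg_eq essinf_ge0 essinf_le2); lra.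
Qed.

Definition core (k : nat) : set R := `[center k - M, center k + M].

Fixpoint cores (n : nat) : set R :=
  match n with 0 => set0 | n'.+1 => cores n' `|` core n end.

Lemma measurable_cores n : measurable (cores n).
Proof.
elim: n => [|n IH] /=; first exact: measurable0.
by apply: measurableU => //; exact: measurable_itv.
Qed.

Lemma cores_le n x : cores n x -> x <= 5 * radius M n.
Proof.
elim: n => [//|n IH] /= [/IH|]; first by have := radius_le M_gt0 (leqnSn n); lra.
rewrite /core /center /= in_itv /= => /andP[_ x_le].
by have := radius_ge M_gt0 n.+1; lra.
Qed.

Lemma measure_cores n : mu (cores n) = (2 * M * n%:R)%:E.
Proof.
elim: n => [|n IH] /=; first by rewrite measure0 mulr0.
have M_gt0' := M_gt0.
have disj : cores n `&` core n.+1 = set0.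
  apply/seteqP; split => x //= [/cores_le x_le].
  rewrite /core /center /= in_itv /= => /andP[x_ge _].
  by have := radius_ge M_gt0 n; have := radiusS M n; lra.
have core_len : mu (core n.+1) = (2 * M)%:E.
  by rewrite /core lebesgue_measure_itv /= lte_fin ifT -?EFinD; [congr (_%:E); ring | lra].
rewrite measureU //; [| exact: measurable_cores | exact: measurable_itv].
apply: eq_trans (congr2 (fun x y => (x + y)%E) IH core_len) _.
by rewrite -EFinD -[n.+1]addn1 natrD; congr (_%:E); ring.
Qed.

(* With [D = 5M] the [k]-th core, of length [2M], lies where [w > x]:
   there [w = 2 ^+ k * D = 5 * radius M k]. *)
Lemma cores_sub_exceed N n : D = 5 * M -> 1 <= M -> (n <= N)%N ->
  cores n `<=` [set x | 1 < x /\ x < spiky N x].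
Proof.
move=> D_eq M_ge1; elim: n => [//|n IH] nN x /= [/IH|]; first by apply; exact: ltnW.
rewrite /core /center /= in_itv /= => /andP[x_ge x_le].
have r2 : 2 * M <= radius M n.+1.
  by have := radius_le M_gt0 (ltn0Sn n); rewrite radiusS radius0.
split; first lra.
have := tower_le_spikes x (_ : (1 <= n.+1 <= N)%N); rewrite nN => /(_ erefl).
rewrite tower_core //.
have -> : 2 ^+ n.+1 * D - 1 = 5 * radius M n.+1 - 1 by rewrite D_eq /radius; ring.
by rewrite /spiky; lra.
Qed.

Lemma measurable_exceed N : measurable [set x | 1 < x /\ x < spiky N x].
Proof.
have -> : [set x | 1 < x /\ x < spiky N x] =
    `]1, +oo[ `&` (setT `&` (fun x => spiky N x - x) @^-1` `]0, +oo[).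
  apply/seteqP; split => x /=; rewrite !in_itv /= !andbT subr_gt0.
  - by case.
  - by case=> x1 [].
apply: measurableI; first exact: measurable_itv.
apply: (measurable_funB _ (@measurable_id _ _ setT)) => //.
by apply: measurable_funD => //; exact: measurable_spikes.
Qed.

End Weight.

Theorem theorem2p2 (R : realType) :
  exists c1 c2 c3 : R, 0 < c1 /\ c1 <= c2 /\ 0 < c3 /\
  forall N : nat, (20 < N)%N ->
  exists w : R -> R, in_A1 w /\
    (\int[@lebesgue_measure R]_(x in `[0%R, 1%R]) (w x)%:E = 1)%E /\
    ((c1 * N%:R)%:E <= A1_const w)%E /\ (A1_const w <= (c2 * N%:R)%:E)%E /\
    ((c3 * (N%:R) ^+ 2)%:E <= @lebesgue_measure R [set x : R | (1 < x)%R /\ (x < w x)%R])%E.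
Proof.
exists 2, 25, 2; do 3!(split; first lra).
move=> N N_gt20; have N_ge1 : (1 <= N)%N by exact: leq_trans N_gt20.
have M_ge1 : 1 <= N%:R :> R by rewrite ler1n.
have M_gt0 : 0 < N%:R :> R by lra.
have D_ge1 : 1 <= 5 * N%:R :> R by lra.
exists (spiky N%:R (5 * N%:R) N); split; first exact: in_A1_spiky.
split; first by apply: spiky_int01 => //; lra.
split.
  by apply: A1_const_ge => C /(spiky_A1_cond_ge M_gt0 D_ge1 N_ge1); lra.
split.
  apply: le_trans (A1_const_le (spiky_A1_cond M_gt0 D_ge1 N)) _.
  by rewrite lee_fin; lra.
have := cores_sub_exceed M_gt0 D_ge1 erefl M_ge1 (leqnn N).
move/(le_measure (@lebesgue_measure R) (mem_set (measurable_cores _ N))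
  (mem_set (measurable_exceed _ _ N))); apply: le_trans.
rewrite -[X in (_ <= X)%E]/(@lebesgue_measure R (cores N%:R N)) measure_cores //.
by rewrite lee_fin expr2; lra.
Qed.
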